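(* Let $a,b\in\alpha$ and let $w_{a,b}$ be the nanoword $(\{A,B\},ABAB)$ with $|A|=a$, $|B|=b$. The group of homotopy automorphisms of $w_{a,b}$ is the full group of $\tau$-equivariant bijections $\alpha\to\alpha$ if $a=\tau(b)$, and is the subgroup of $\tau$-equivariant bijections $f$ with $f(a)=a$ and $f(b)=b$ if $a\neq\tau(b)$.
   Context: Fix a set $\alpha$ with an involution $\tau$. An $\alpha$-alphabet is a set $\mathcal A$ with a map $p:\mathcal A\to\alpha$, $A\mapsto|A|$. A nanoword over $\alpha$ is a pair $(\mathcal A,w)$ with $\mathcal A$ a finite $\alpha$-alphabet and $w$ a word in which each letter occurs exactly twice. Isomorphism: bijection of alphabets preserving $|\cdot|$ carrying one word to the other letterwise. Homotopy moves ($x,y,z,t$ words in the remaining letters): (1) $(\mathcal A,xAAy)\mapsto(\mathcal A\setminus\{A\},xy)$; (2) $(\mathcal A,xAByBAz)\mapsto(\mathcal A\setminus\{A,B\},xyz)$ if $|B|=\tau(|A|)$; (3) $(\mathcal A,xAByACzBCt)\mapsto(\mathcal A,xBAyCAzCBt)$ if $A,B,C$ distinct with $|A|=|B|=|C|$. Homotopy ($\simeq$) is generated by isomorphisms, these moves and inverses. For a bijection $f:\alpha\to\alpha$ and a nanoword $(\mathcal A,p,w)$, let $f_\#(w)=(\mathcal A,f\circ p,w)$. A homotopy automorphism of $w$ is a $\tau$-equivariant bijection $f:\alpha\to\alpha$ (i.e. $f\tau=\tau f$) such that $f_\#(w)\simeq w$; these form a group under composition. *)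

From mathcomp Require Import all_boot.
From Stdlib Require Import Relations.Relation_Operators.
Set Implicit Arguments. Unset Strict Implicit. Unset Printing Implicit Defensive.

(* Letters are natural numbers; the alphabet of a
   nanoword is the set of letters occurring in its word (each letter of the
   alphabet occurs exactly twice, so the alphabet is determined by the word).
   The map |.| : A -> alpha is given by [lab] (its values on letters not
   occurring in the word are irrelevant). *)
Record nanoword (alpha : Type) := Nanoword { nw_word : seq nat ; nw_lab : nat -> alpha }.

Definition wf_nanoword (alpha : Type) (w : nanoword alpha) : Prop :=
  forall x, x \in nw_word w -> count_mem x (nw_word w) = 2.

Inductive nw_step (alpha : Type) (tau : alpha -> alpha) :
    nanoword alpha -> nanoword alpha -> Prop :=
| step_iso (w1 w2 : nanoword alpha) (g : nat -> nat) :
    wf_nanoword w1 ->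
    {in nw_word w1 &, injective g} ->
    map g (nw_word w1) = nw_word w2 ->
    (forall x, x \in nw_word w1 -> nw_lab w2 (g x) = nw_lab w1 x) ->
    nw_step tau w1 w2
| step_move1 (lab : nat -> alpha) (A : nat) (x y : seq nat) :
    wf_nanoword (Nanoword (x ++ [:: A; A] ++ y) lab) ->
    nw_step tau (Nanoword (x ++ [:: A; A] ++ y) lab) (Nanoword (x ++ y) lab)
| step_move2 (lab : nat -> alpha) (A B : nat) (x y z : seq nat) :
    wf_nanoword (Nanoword (x ++ [:: A; B] ++ y ++ [:: B; A] ++ z) lab) ->
    lab B = tau (lab A) ->
    nw_step tau (Nanoword (x ++ [:: A; B] ++ y ++ [:: B; A] ++ z) lab)
                (Nanoword (x ++ y ++ z) lab)
| step_move3 (lab : nat -> alpha) (A B C : nat) (x y z t : seq nat) :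
    wf_nanoword (Nanoword (x ++ [:: A; B] ++ y ++ [:: A; C] ++ z ++ [:: B; C] ++ t) lab) ->
    A <> B -> A <> C -> B <> C ->
    lab A = lab B -> lab B = lab C ->
    nw_step tau (Nanoword (x ++ [:: A; B] ++ y ++ [:: A; C] ++ z ++ [:: B; C] ++ t) lab)
                (Nanoword (x ++ [:: B; A] ++ y ++ [:: C; A] ++ z ++ [:: C; B] ++ t) lab).

Definition nw_homotopic (alpha : Type) (tau : alpha -> alpha) :
    nanoword alpha -> nanoword alpha -> Prop :=
  clos_refl_sym_trans (nanoword alpha) (@nw_step alpha tau).

Definition nw_push (alpha : Type) (f : alpha -> alpha) (w : nanoword alpha) :=
  Nanoword (nw_word w) (f \o nw_lab w).

Definition tau_equivariant_bij (alpha : Type) (tau f : alpha -> alpha) : Prop :=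
  bijective f /\ forall x, f (tau x) = tau (f x).

Definition homotopy_automorphism (alpha : Type) (tau : alpha -> alpha)
    (w : nanoword alpha) (f : alpha -> alpha) : Prop :=
  tau_equivariant_bij tau f /\ nw_homotopic tau (nw_push f w) w.

(* w_{a,b} = ({A,B}, ABAB) with A = 0, B = 1, |A| = a, |B| = b. *)
Definition w_ab (alpha : Type) (a b : alpha) : nanoword alpha :=
  Nanoword [:: 0; 1; 0; 1] (fun n => if n == 0 then a else b).

(* Two homotopy invariants of nanowords detect the labels of ABAB.  Call letters
   A, C linked (with sign +1 or -1) when they occur in the order ACAC or CACA,
   and set lk_rho(A) = sum of sign(A, C) * rho |C|.  Then
   sum_A chi |A| * P (lk_rho A) is invariant when chi is tau-odd, P 0 = 0 and P
   is periodic modulo every rho x + rho (tau x); and the parity of the number of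
   linked ordered pairs (A, C) with W |A| |C| is invariant when W is
   tau-invariant in each argument and irreflexive.  On ABAB they take the values
   chi a * P (rho b) + chi b * P (- rho a) and W a b, and choosing chi, rho, W
   from the tau-orbits of a and b (with P the reduction mod 2) shows that
   f_#(w) ~ w forces f a = a and f b = b when a <> tau b.  When a = tau b the
   word ABAB is homotopically trivial, so every f qualifies. *)

From mathcomp Require Import all_boot all_algebra zify.
From mathcomp Require Import boolp.
From Stdlib Require Import Relations.Relation_Operators.
Set Implicit Arguments. Unset Strict Implicit. Unset Printing Implicit Defensive.
Import GRing.Theory.

Definition subword2 (w : seq nat) (D E : nat) := [seq X <- w | (X == D) || (X == E)].

Definition linked (w : seq nat) (D E : nat) : bool :=
  (D != E) && (subword2 w D E == [:: D; E; D; E]).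

Lemma subword2_cat w1 w2 D E : subword2 (w1 ++ w2) D E = subword2 w1 D E ++ subword2 w2 D E.
Proof. exact: filter_cat. Qed.

Lemma subword2_nil (s : seq nat) D E : D \notin s -> E \notin s -> subword2 s D E = [::].
Proof.
move=> Ds Es; rewrite -(filter_pred0 s); apply: eq_in_filter => X Xs.
by apply/negbTE; rewrite negb_or; apply/andP; split; [apply: contraNneq Ds | apply: contraNneq Es] => <-.
Qed.

Lemma subword2_swap X Y D E : ~~ ((X \in [:: D; E]) && (Y \in [:: D; E])) ->
  subword2 [:: X; Y] D E = subword2 [:: Y; X] D E.
Proof. by rewrite /subword2 !inE /=; case: (X == D); case: (X == E); case: (Y == D); case: (Y == E). Qed.

Lemma subword2C w D E : subword2 w D E = subword2 w E D.
Proof. by apply: eq_filter => X; rewrite orbC. Qed.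

Lemma linked_adjacent w D E s1 s2 X : subword2 w D E = s1 ++ [:: X; X] ++ s2 ->
  linked w D E = false /\ linked w E D = false.
Proof.
have no_adj F G : subword2 w F G = s1 ++ [:: X; X] ++ s2 -> linked w F G = false.
  rewrite /linked => ->; case: eqP => //= /eqP FG; apply/negbTE/eqP.
  case: s1 => [|? [|? [|? ?]]]; try by case=> *; subst; rewrite eqxx in FG.
  by move/(congr1 size); rewrite size_cat /=; lia.
by move=> sw; rewrite !no_adj // -subword2C.
Qed.

Lemma linked_diag w D : linked w D D = false.
Proof. by rewrite /linked eqxx. Qed.

Lemma linked_map (g : nat -> nat) w D E : {in w &, injective g} ->
  D \in w -> E \in w -> linked (map g w) (g D) (g E) = linked w D E.
Proof.
move=> ginj Dw Ew; rewrite /linked (inj_in_eq ginj) //; congr (_ && _).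
have -> : subword2 (map g w) (g D) (g E) = map g (subword2 w D E).
  by rewrite /subword2 filter_map; congr map; apply: eq_in_filter => X Xw /=; rewrite !(inj_in_eq ginj).
rewrite -[[:: g D; g E; g D; g E]]/(map g [:: D; E; D; E]) (inj_in_eq (inj_in_map ginj)) //.
  by rewrite inE; apply/allP => X; rewrite mem_filter => /andP[].
by rewrite inE /= Dw Ew.
Qed.

Lemma wf_fresh (alpha : Type) (lab : nat -> alpha) w S w0 :
  wf_nanoword (Nanoword w lab) -> perm_eq w (S ++ S ++ w0) ->
  uniq S /\ {in S, forall A, A \notin w0}.
Proof.
move=> wf_w pw.
have count_S A : A \in S -> count_mem A S = 1 /\ count_mem A w0 = 0.
  move=> AS; have := wf_w A; rewrite /= (perm_mem pw) !mem_cat AS (permP pw) !count_cat.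
  have : 0 < count_mem A S by rewrite -has_count has_pred1.
  set c := count_mem A S; set d := count_mem A w0; lia.
split=> [|A /count_S[_] /count_memPn //].
apply: count_mem_uniq => A; case: (boolP (A \in S)) => [/count_S[-> _] //|].
exact: count_memPn.
Qed.

Lemma perm_undup_fresh (w S w0 : seq nat) : uniq S -> {in S, forall A, A \notin w0} ->
  perm_eq w (S ++ S ++ w0) -> perm_eq (undup w) (S ++ undup w0).
Proof.
move=> uS Sw0 pw; apply: uniq_perm; rewrite ?undup_uniq //.
  rewrite cat_uniq uS undup_uniq andbT; apply/hasPn => X; rewrite mem_undup.
  by apply: contraL => /Sw0.
by move=> X; rewrite mem_undup (perm_mem pw) !mem_cat mem_undup orbA orbb.
Qed.

Lemma undup_map_inj (g : nat -> nat) w : {in w &, injective g} ->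
  perm_eq (undup (map g w)) (map g (undup w)).
Proof.
move=> g_inj; apply: uniq_perm; rewrite ?undup_uniq ?map_inj_in_uniq ?undup_uniq //.
  by move=> D E; rewrite !mem_undup; apply: g_inj.
by move=> D; rewrite mem_undup (eq_mem_map g (mem_undup w)).
Qed.

Local Open Scope ring_scope.

Definition lsign (w : seq nat) (D E : nat) : int := (linked w D E)%:R - (linked w E D)%:R.

Lemma lsignN w D E : lsign w E D = - lsign w D E.
Proof. by rewrite /lsign opprB. Qed.

Lemma lsign_diag w D : lsign w D D = 0.
Proof. exact: subrr. Qed.

Section Move1.
Variables (x y : seq nat) (A : nat).
Let w := x ++ [:: A; A] ++ y.

Lemma perm_move1 : perm_eq w ([:: A] ++ [:: A] ++ x ++ y).
Proof. by apply/permP => p; rewrite /w !count_cat /=; lia. Qed.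

Hypothesis S_fresh : {in [:: A], forall D, D \notin x ++ y}.

Lemma undup_move1 : perm_eq (undup w) (A :: undup (x ++ y)).
Proof. exact: perm_undup_fresh S_fresh perm_move1. Qed.

Lemma undup_move1_neq D : D \in undup (x ++ y) -> D != A.
Proof. by rewrite mem_undup; apply: contraTneq => ->; apply/S_fresh/mem_head. Qed.

Lemma linked_move1 D E : D != A -> E != A -> linked w D E = linked (x ++ y) D E.
Proof.
move=> DA EA; rewrite /linked !subword2_cat.
by rewrite [subword2 [:: A; A] _ _]subword2_nil // !inE negb_or ?DA ?EA.
Qed.

Lemma unlinked_move1 D : linked w A D = false /\ linked w D A = false.
Proof.
apply: (@linked_adjacent _ _ _ (subword2 x A D) (subword2 y A D) A).
by rewrite /w !subword2_cat /subword2 /= eqxx.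
Qed.
End Move1.

Section Move2.
Variables (x y z : seq nat) (A B : nat).
Let S := [:: A; B].
Let w := x ++ [:: A; B] ++ y ++ [:: B; A] ++ z.
Let w0 := x ++ y ++ z.

Lemma perm_move2 : perm_eq w (S ++ S ++ w0).
Proof. by apply/permP => p; rewrite /w /w0 !count_cat /=; lia. Qed.

Hypothesis S_uniq : uniq S.
Hypothesis S_fresh : {in S, forall D, D \notin w0}.
Let AB : A != B. Proof. by move: S_uniq; rewrite /= inE andbT. Qed.
Let A_fresh : A \notin w0. Proof. exact/S_fresh/mem_head. Qed.
Let B_fresh : B \notin w0. Proof. by apply: S_fresh; rewrite !inE eqxx orbT. Qed.

Lemma undup_move2 : perm_eq (undup w) (A :: B :: undup w0).
Proof. exact: perm_undup_fresh S_uniq S_fresh perm_move2. Qed.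

Lemma undup_move2_neq D : D \in undup w0 -> D != A /\ D != B.
Proof. by rewrite mem_undup => Dw0; split; apply: contraTneq Dw0 => ->. Qed.

Lemma linked_move2 D E : D \in undup w0 -> E \in undup w0 -> linked w D E = linked w0 D E.
Proof.
move=> /undup_move2_neq[DA DB] /undup_move2_neq[EA EB]; rewrite /linked !subword2_cat.
by rewrite !(@subword2_nil [:: _; _]) // !inE !negb_or ?DA ?DB ?EA ?EB.
Qed.

Lemma unlinked_move2 : linked w A B = false /\ linked w B A = false.
Proof.
apply: (@linked_adjacent _ _ _ [:: A] [:: A] B).
move: A_fresh B_fresh; rewrite /w !mem_cat !negb_or => /and3P[Ax Ay Az] /and3P[Bx By Bz].
rewrite !subword2_cat (subword2_nil Ax Bx) (subword2_nil Ay By) (subword2_nil Az Bz).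
by rewrite /subword2 /= !eqxx !orbT.
Qed.

(* Swapping the names A and B turns w into w with its two adjacent pairs AB, BA
   transposed, and such transpositions are invisible to a pair {B, C}. *)
Lemma linked_move2_swap C : C \in undup w0 ->
  linked w B C = linked w A C /\ linked w C B = linked w C A.
Proof.
move=> Cw0; have [CA CB] := undup_move2_neq Cw0; rewrite mem_undup in Cw0.
pose g n := if n == A then B else if n == B then A else n.
have gK : involutive g by move=> n; rewrite /g; do !case: eqP => //; congruence.
have g_id s : A \notin s -> B \notin s -> map g s = s.
  move=> As Bs; apply: map_id_in => X Xs.
  have [XA XB] : X != A /\ X != B by split; [apply: contraNneq As | apply: contraNneq Bs] => <-.
  by rewrite /g (negbTE XA) (negbTE XB).
have map_g : map g w = x ++ [:: B; A] ++ y ++ [:: A; B] ++ z.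
  move: A_fresh B_fresh; rewrite /w !mem_cat !negb_or => /and3P[Ax Ay Az] /and3P[Bx By Bz].
  have BA : B != A by rewrite eq_sym.
  by rewrite !map_cat (g_id _ Ax Bx) (g_id _ Ay By) (g_id _ Az Bz) /g /= eqxx (negbTE BA) eqxx.
have linked_g F G : A \notin [:: F; G] -> linked w F G = linked (map g w) F G.
  by move=> AFG; rewrite map_g /linked !subword2_cat subword2_swap // (negbTE AFG).
have [gA gC] : g A = B /\ g C = C by rewrite /g eqxx (negbTE CA) (negbTE CB).
have [Aw Cw] : A \in w /\ C \in w.
  by move: Cw0; rewrite /w /w0 !mem_cat !inE eqxx => /or3P[] ->; rewrite ?orbT.
have g_inj : {in w &, injective g} by apply: in2W; apply: can_inj gK.
have [ABC ACB] : A \notin [:: B; C] /\ A \notin [:: C; B].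
  by rewrite !inE !negb_or AB eq_sym CA.
rewrite (linked_g _ _ ABC) (linked_g _ _ ACB).
by split; rewrite -{1}gA -{1}gC linked_map.
Qed.

Lemma lsign_move2_swap C : C \in undup w0 -> lsign w B C = lsign w A C.
Proof. by move=> Cw0; rewrite /lsign; have [-> ->] := linked_move2_swap Cw0. Qed.
End Move2.

Section Move3.
Variables (x y z t : seq nat) (A B C : nat).
Let S := [:: A; B; C].
Let w := x ++ [:: A; B] ++ y ++ [:: A; C] ++ z ++ [:: B; C] ++ t.
Let w' := x ++ [:: B; A] ++ y ++ [:: C; A] ++ z ++ [:: C; B] ++ t.
Let w0 := x ++ y ++ z ++ t.

Lemma perm_move3 : perm_eq w (S ++ S ++ w0).
Proof. by apply/permP => p; rewrite /w /w0 !count_cat /=; lia. Qed.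

Hypothesis S_uniq : uniq S.
Hypothesis S_fresh : {in S, forall D, D \notin w0}.
Let AB : A != B. Proof. by apply: contraTneq S_uniq => e; rewrite /S e /= !inE !eqxx. Qed.
Let AC : A != C. Proof. by apply: contraTneq S_uniq => e; rewrite /S e /= !inE !eqxx orbT. Qed.
Let BC : B != C. Proof. by apply: contraTneq S_uniq => e; rewrite /S e /= !inE !eqxx andbF. Qed.

Lemma undup_move3 : perm_eq (undup w) (S ++ undup w0) /\ perm_eq (undup w') (S ++ undup w0).
Proof.
split; apply: perm_undup_fresh => //; first exact: perm_move3.
by apply/permP => p; rewrite /w' /w0 !count_cat /=; lia.
Qed.

Lemma perm_undup_move3 : perm_eq (undup w) (undup w').
Proof. by have [pw pw'] := undup_move3; rewrite (perm_trans pw) // perm_sym. Qed.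

Lemma undup_move3_notin E : E \in undup w0 -> E \notin S.
Proof. by rewrite mem_undup => Ew0; apply/negP => /S_fresh; rewrite Ew0. Qed.

Lemma linked_move3_out D E : ~~ ((D \in S) && (E \in S)) -> linked w D E = linked w' D E.
Proof.
move=> DES; have swap X Y : X \in S -> Y \in S -> X != Y ->
    subword2 [:: X; Y] D E = subword2 [:: Y; X] D E.
  move=> XS YS XY; apply: subword2_swap; apply: contra DES; clearbody S; rewrite !inE.
  move=> /andP[/orP[]/eqP XD /orP[]/eqP YD]; subst;
  by rewrite ?XS ?YS //; rewrite eqxx in XY.
by rewrite /linked /w /w' !subword2_cat (swap A B) ?(swap A C) ?(swap B C) // !inE eqxx ?orbT.
Qed.

Lemma linked_move3_in D E : D \in S -> E \in S ->
  linked w D E = linked [:: A; B; A; C; B; C] D E /\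
  linked w' D E = linked [:: B; A; C; A; C; B] D E.
Proof.
move=> /S_fresh DS /S_fresh ES; move: DS ES; rewrite /w0 !mem_cat !negb_or.
case/and4P=> Dx Dy Dz Dt /and4P[Ex Ey Ez Et].
rewrite /linked /w /w' !subword2_cat (subword2_nil Dx Ex) (subword2_nil Dy Ey).
by rewrite (subword2_nil Dz Ez) (subword2_nil Dt Et) !cat0s !cats0 -!subword2_cat.
Qed.

(* In w the linked pairs among A, B, C are AB and BC, in w' only AC; the
   signed row sums nevertheless agree. *)
Lemma lsign_move3_row D : D \in S ->
  lsign w D A + lsign w D B + lsign w D C = lsign w' D A + lsign w' D B + lsign w' D C.
Proof.
have [BA CA CB] : [/\ B != A, C != A & C != B] by split; rewrite eq_sym.
have [AS BS CS] : [/\ A \in S, B \in S & C \in S] by rewrite !inE !eqxx !orbT.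
move=> DS; rewrite /lsign !(proj1 (linked_move3_in _ _)) ?(proj2 (linked_move3_in _ _)) //.
have neq := (negbTE AB, negbTE AC, negbTE BC, negbTE BA, negbTE CA, negbTE CB).
move: DS; rewrite !inE => /or3P[]/eqP ->;
by rewrite /linked /subword2 /= !eqxx ?neq /= ?eqseq_cons ?eqxx ?neq.
Qed.
End Move3.

Section LinkingInvariant.
Variables (alpha : Type) (tau : alpha -> alpha).
Variables (chi rho : alpha -> int) (P : int -> int).
Hypothesis chiN : forall x, chi (tau x) = - chi x.
Hypothesis P0 : P 0 = 0.
Hypothesis P_periodic : forall v x, P (v + (rho x + rho (tau x))) = P v.

Definition lk_number (lab : nat -> alpha) w D :=
  \sum_(E <- undup w) lsign w D E * rho (lab E).

Definition lk_invariant (lab : nat -> alpha) w :=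
  \sum_(D <- undup w) chi (lab D) * P (lk_number lab w D).

Lemma P_periodicM v x (k : int) : P (k * (rho x + rho (tau x)) + v) = P v.
Proof.
elim/int_ind: k v => [|n IH|n IH] v; first by rewrite mul0r add0r.
  by rewrite -addn1 PoszD mulrDl mul1r -addrA IH addrC P_periodic.
rewrite -addn1 PoszD opprD mulrDl mulN1r -addrA IH.
by rewrite addrC -{2}(subrK (rho x + rho (tau x)) v) P_periodic.
Qed.

Lemma lk_invariant_move1 x y A lab : {in [:: A], forall D, D \notin x ++ y} ->
  lk_invariant lab (x ++ [:: A; A] ++ y) = lk_invariant lab (x ++ y).
Proof.
move=> fS; have lsignA D : lsign (x ++ [:: A; A] ++ y) A D = 0.
  by rewrite /lsign; have [-> ->] := @unlinked_move1 x y A D.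
have lkA : lk_number lab (x ++ [:: A; A] ++ y) A = 0.
  by rewrite /lk_number big1 // => E _; rewrite lsignA mul0r.
have lkD D : D \in undup (x ++ y) ->
    lk_number lab (x ++ [:: A; A] ++ y) D = lk_number lab (x ++ y) D.
  move=> /(undup_move1_neq fS) DA.
  rewrite /lk_number (perm_big _ (undup_move1 fS)) big_cons /= lsignN lsignA oppr0 mul0r add0r.
  by apply: eq_big_seq => E /(undup_move1_neq fS) EA; rewrite /lsign !linked_move1.
rewrite /lk_invariant (perm_big _ (undup_move1 fS)) big_cons /= lkA P0 mulr0 add0r.
by apply: eq_big_seq => D Dw0; rewrite lkD.
Qed.

(* A and B have equal linking numbers and opposite weights chi, so their terms
   cancel; every other linking number moves by a multiple of rho a + rho (tau a). *)
Lemma lk_invariant_move2 x y z A B lab : uniq [:: A; B] ->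
  {in [:: A; B], forall D, D \notin x ++ y ++ z} -> lab B = tau (lab A) ->
  lk_invariant lab (x ++ [:: A; B] ++ y ++ [:: B; A] ++ z) = lk_invariant lab (x ++ y ++ z).
Proof.
move=> uS fS labB; set w := x ++ _; set w0 := x ++ y ++ z.
have pw := undup_move2 uS fS.
have lsignAB : lsign w A B = 0 by rewrite /lsign; have [-> ->] := unlinked_move2 fS.
have lkAB : lk_number lab w B = lk_number lab w A.
  rewrite /lk_number !(perm_big _ pw) !big_cons /= lsignN lsignAB !lsign_diag.
  rewrite oppr0 !mul0r !add0r.
  by apply: eq_big_seq => E /(lsign_move2_swap uS fS) ->.
have lkD D : D \in undup w0 -> lk_number lab w D =
    lsign w D A * (rho (lab A) + rho (tau (lab A))) + lk_number lab w0 D.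
  move=> Dw0; rewrite /lk_number (perm_big _ pw) !big_cons /= addrA -labB.
  rewrite [lsign w D B]lsignN lsign_move2_swap // -lsignN -mulrDr; congr (_ + _).
  by apply: eq_big_seq => E Ew0; rewrite /lsign !linked_move2.
rewrite /lk_invariant (perm_big _ pw) !big_cons /= lkAB labB chiN mulNr addrA subrr add0r.
by apply: eq_big_seq => D Dw0; rewrite lkD // P_periodicM.
Qed.

Lemma lk_invariant_move3 x y z t A B C lab : uniq [:: A; B; C] ->
  {in [:: A; B; C], forall D, D \notin x ++ y ++ z ++ t} -> lab A = lab B -> lab B = lab C ->
  lk_invariant lab (x ++ [:: A; B] ++ y ++ [:: A; C] ++ z ++ [:: B; C] ++ t) =
  lk_invariant lab (x ++ [:: B; A] ++ y ++ [:: C; A] ++ z ++ [:: C; B] ++ t).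
Proof.
move=> uS fS lAB lBC; set w := x ++ [:: A; B] ++ _; set w' := x ++ [:: B; A] ++ _.
have [pw pw'] := undup_move3 uS fS; have pww' := perm_undup_move3 uS fS.
have lsign_out D E : ~~ ((D \in [:: A; B; C]) && (E \in [:: A; B; C])) -> lsign w D E = lsign w' D E.
  by move=> DES; rewrite /lsign !linked_move3_out // andbC.
have lk_eq D : lk_number lab w D = lk_number lab w' D.
  rewrite /lk_number; case: (boolP (D \in [:: A; B; C])) => DS; last first.
    by rewrite (perm_big _ pww'); apply: eq_bigr => E _; rewrite lsign_out ?(negbTE DS).
  rewrite (perm_big _ pw) (perm_big _ pw') !big_cat !big_cons !big_nil /= -lBC -lAB !addr0.
  rewrite !addrA -!mulrDl lsign_move3_row //; congr (_ + _).
  apply: eq_big_seq => E /(undup_move3_notin fS) ES.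
  by rewrite lsign_out // (negbTE ES) andbF.
by rewrite /lk_invariant (perm_big _ pww'); apply: eq_bigr => D _; rewrite lk_eq.
Qed.

Lemma lk_invariant_iso w (g : nat -> nat) (lab1 lab2 : nat -> alpha) :
  {in w &, injective g} -> {in w, forall D, lab2 (g D) = lab1 D} ->
  lk_invariant lab2 (map g w) = lk_invariant lab1 w.
Proof.
move=> g_inj g_lab; have pw := undup_map_inj g_inj.
have lk_eq D : D \in w -> lk_number lab2 (map g w) (g D) = lk_number lab1 w D.
  move=> Dw; rewrite /lk_number (perm_big _ pw) big_map.
  by apply: eq_big_seq => E; rewrite mem_undup => Ew; rewrite /lsign !linked_map // g_lab.
rewrite /lk_invariant (perm_big _ pw) big_map.
by apply: eq_big_seq => D; rewrite mem_undup => Dw; rewrite lk_eq // g_lab.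
Qed.

Lemma lk_invariant_step w1 w2 : nw_step tau w1 w2 ->
  lk_invariant (nw_lab w1) (nw_word w1) = lk_invariant (nw_lab w2) (nw_word w2).
Proof.
case=> [v1 v2 g _ g_inj <- g_lab | lab A x y wf | lab A B x y z wf labB
       | lab A B C x y z t wf _ _ _ lAB lBC] /=.
- by rewrite (lk_invariant_iso g_inj g_lab).
- by have [_ fS] := wf_fresh wf (perm_move1 x y A); rewrite lk_invariant_move1.
- by have [uS fS] := wf_fresh wf (perm_move2 x y z A B); rewrite lk_invariant_move2.
- by have [uS fS] := wf_fresh wf (perm_move3 x y z t A B C); rewrite lk_invariant_move3.
Qed.
End LinkingInvariant.

Section LinkedPairsInvariant.
Variables (alpha : Type) (tau : alpha -> alpha) (W : alpha -> alpha -> bool).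
Hypothesis W_tau_l : forall x y, W (tau x) y = W x y.
Hypothesis W_tau_r : forall x y, W x (tau y) = W x y.
Hypothesis W_irr : forall x, W x x = false.

Definition linked_pairs (lab : nat -> alpha) w : nat :=
  \sum_(D <- undup w) \sum_(E <- undup w) (linked w D E && W (lab D) (lab E)).

Lemma linked_pairs_move1 x y A lab : {in [:: A], forall D, D \notin x ++ y} ->
  linked_pairs lab (x ++ [:: A; A] ++ y) = linked_pairs lab (x ++ y).
Proof.
move=> fS; have pw := undup_move1 fS.
rewrite /linked_pairs (perm_big _ pw) big_cons big1 => [|E _]; last first.
  by rewrite (@unlinked_move1 x y A E).1.
apply: eq_big_seq => D /(undup_move1_neq fS) DA.
rewrite (perm_big _ pw) big_cons (@unlinked_move1 x y A D).2.
by apply: eq_big_seq => E /(undup_move1_neq fS) EA; rewrite linked_move1.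
Qed.

(* The letters A and B contribute equal rows, and equal entries to every other
   row, so the parity is unchanged. *)
Lemma linked_pairs_move2 x y z A B lab : uniq [:: A; B] ->
  {in [:: A; B], forall D, D \notin x ++ y ++ z} -> lab B = tau (lab A) ->
  odd (linked_pairs lab (x ++ [:: A; B] ++ y ++ [:: B; A] ++ z)) =
  odd (linked_pairs lab (x ++ y ++ z)).
Proof.
move=> uS fS labB; set w := x ++ _; set w0 := x ++ y ++ z.
have pw := undup_move2 uS fS; have [unlinkedAB unlinkedBA] := unlinked_move2 fS.
have rowB : (\sum_(E <- undup w) (linked w B E && W (lab B) (lab E)) =
             \sum_(E <- undup w) (linked w A E && W (lab A) (lab E)))%N.
  rewrite !(perm_big _ pw) !big_cons /= unlinkedAB unlinkedBA !linked_diag labB W_tau_l.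
  by apply: eq_big_seq => E Ew0; have [-> _] := linked_move2_swap uS fS Ew0; rewrite W_tau_l.
have rowD D : D \in undup w0 ->
    (\sum_(E <- undup w) (linked w D E && W (lab D) (lab E)) =
     (linked w D A && W (lab D) (lab A)) + (linked w D A && W (lab D) (lab A)) +
     \sum_(E <- undup w0) (linked w0 D E && W (lab D) (lab E)))%N.
  move=> Dw0; rewrite (perm_big _ pw) !big_cons /= addnA labB W_tau_r.
  have [_ ->] := linked_move2_swap uS fS Dw0; congr (_ + _)%N.
  by apply: eq_big_seq => E Ew0; rewrite linked_move2.
rewrite /linked_pairs (perm_big _ pw) !big_cons /= rowB (eq_big_seq _ rowD).
by rewrite !big_split /= !oddD addKb addbb.
Qed.

Lemma linked_pairs_move3 x y z t A B C lab : uniq [:: A; B; C] ->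
  {in [:: A; B; C], forall D, D \notin x ++ y ++ z ++ t} -> lab A = lab B -> lab B = lab C ->
  linked_pairs lab (x ++ [:: A; B] ++ y ++ [:: A; C] ++ z ++ [:: B; C] ++ t) =
  linked_pairs lab (x ++ [:: B; A] ++ y ++ [:: C; A] ++ z ++ [:: C; B] ++ t).
Proof.
move=> uS fS lAB lBC; have pww' := perm_undup_move3 uS fS.
have lab_S D : D \in [:: A; B; C] -> lab D = lab A.
  by rewrite !inE => /or3P[]/eqP ->; rewrite -?lBC -?lAB.
rewrite /linked_pairs (perm_big _ pww'); apply: eq_bigr => D _.
rewrite (perm_big _ pww'); apply: eq_bigr => E _.
case: (boolP ((D \in [:: A; B; C]) && (E \in [:: A; B; C]))) => [|DES].
  by case/andP=> /lab_S -> /lab_S ->; rewrite W_irr !andbF.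
by rewrite linked_move3_out.
Qed.

Lemma linked_pairs_iso w (g : nat -> nat) (lab1 lab2 : nat -> alpha) :
  {in w &, injective g} -> {in w, forall D, lab2 (g D) = lab1 D} ->
  linked_pairs lab2 (map g w) = linked_pairs lab1 w.
Proof.
move=> g_inj g_lab; have pw := undup_map_inj g_inj.
rewrite /linked_pairs (perm_big _ pw) big_map.
apply: eq_big_seq => D; rewrite mem_undup => Dw.
rewrite (perm_big _ pw) big_map.
by apply: eq_big_seq => E; rewrite mem_undup => Ew; rewrite linked_map // !g_lab.
Qed.

Lemma linked_pairs_step w1 w2 : nw_step tau w1 w2 ->
  odd (linked_pairs (nw_lab w1) (nw_word w1)) = odd (linked_pairs (nw_lab w2) (nw_word w2)).
Proof.
case=> [v1 v2 g _ g_inj <- g_lab | lab A x y wf | lab A B x y z wf labB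
       | lab A B C x y z t wf _ _ _ lAB lBC] /=.
- by rewrite (linked_pairs_iso g_inj g_lab).
- by have [_ fS] := wf_fresh wf (perm_move1 x y A); rewrite linked_pairs_move1.
- by have [uS fS] := wf_fresh wf (perm_move2 x y z A B); rewrite linked_pairs_move2.
- by have [uS fS] := wf_fresh wf (perm_move3 x y z t A B C); rewrite linked_pairs_move3.
Qed.
End LinkedPairsInvariant.

Lemma nw_homotopic_invariant (alpha T : Type) (tau : alpha -> alpha) (I : nanoword alpha -> T) :
  (forall w1 w2, nw_step tau w1 w2 -> I w1 = I w2) ->
  forall w1 w2, nw_homotopic tau w1 w2 -> I w1 = I w2.
Proof. by move=> I_step w1 w2; elim=> [u v /I_step | u | u v _ -> | u v r _ -> _ ->]. Qed.

Lemma lk_invariant_ABAB (alpha : Type) (chi rho : alpha -> int) (P : int -> int) (L : nat -> alpha) :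
  lk_invariant chi rho P L [:: 0; 1; 0; 1]%N =
  chi (L 0%N) * P (rho (L 1%N)) + chi (L 1%N) * P (- rho (L 0%N)).
Proof.
rewrite /lk_invariant /lk_number /lsign /linked /= !big_cons !big_nil /=.
by rewrite !mul0r !mul1r !mulN1r !addr0 !add0r.
Qed.

Lemma linked_pairs_ABAB (alpha : Type) (W : alpha -> alpha -> bool) (L : nat -> alpha) :
  linked_pairs W L [:: 0; 1; 0; 1]%N = W (L 0%N) (L 1%N).
Proof. by rewrite /linked_pairs /linked /= !big_cons !big_nil /= !addn0; case: (W _ _). Qed.

Section Orbits.
Variables (alpha : Type) (tau : alpha -> alpha).
Hypothesis tau_invol : involutive tau.

Definition in_orbit (z x : alpha) : bool := `[< x = z \/ x = tau z >].

Definition orbit_sign (z x : alpha) : int :=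
  if `[< x = z >] then 1 else if `[< x = tau z >] then -1 else 0.

Lemma in_orbitP z x : reflect (x = z \/ x = tau z) (in_orbit z x).
Proof. exact: asboolP. Qed.

Lemma in_orbit_refl z : in_orbit z z.
Proof. by apply/in_orbitP; left. Qed.

Lemma in_orbit_tau z x : in_orbit z (tau x) = in_orbit z x.
Proof. by apply/in_orbitP/in_orbitP => -[] /(congr1 tau); rewrite ?tau_invol; auto. Qed.

Lemma orbit_sign_refl z : orbit_sign z z = 1.
Proof. by rewrite /orbit_sign asboolT. Qed.

Lemma orbit_sign_eq1 z x : orbit_sign z x = 1 -> x = z.
Proof. by rewrite /orbit_sign; case: asboolP => // _; case: asboolP. Qed.

Lemma orbit_sign_out z x : ~~ in_orbit z x -> orbit_sign z x = 0.
Proof. by move/in_orbitP=> xz; rewrite /orbit_sign !asboolF //; auto. Qed.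

Lemma orbit_signN z : z <> tau z -> forall x, orbit_sign z (tau x) = - orbit_sign z x.
Proof.
move=> zz x; have tau_eq y : tau x = y <-> x = tau y.
  by split=> [<-|->]; rewrite tau_invol.
rewrite /orbit_sign (asbool_equiv_eq (tau_eq z)) (asbool_equiv_eq (tau_eq (tau z))) tau_invol.
by case: asboolP => [->|_]; case: asboolP => // e; case: zz.
Qed.
(* The identity is the one [lk_invariant_push] provides for chi = orbit_sign z
   and rho the indicator of the orbit of c. *)
Lemma orbit_sign_fixed z c u v : in_orbit z u -> in_orbit c v ->
  ~~ in_orbit z v -> ~~ in_orbit z c ->
  (z <> tau z -> orbit_sign z u * (in_orbit c v)%:R + orbit_sign z v * (in_orbit c u)%:R =
     orbit_sign z z * (in_orbit c c)%:R + orbit_sign z c * (in_orbit c z)%:R) ->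
  u = z.
Proof.
move=> zu cv zv zc; have [zz|nz] := pselect (z = tau z).
  by case/in_orbitP: zu => -> //; rewrite -zz.
move/(_ nz); rewrite (orbit_sign_out zv) (orbit_sign_out zc) cv in_orbit_refl orbit_sign_refl.
by rewrite /= !mul0r !addr0 mulr1n !mulr1; apply: orbit_sign_eq1.
Qed.
End Orbits.

Section HomotopyAutomorphism.
Variables (alpha : Type) (tau : alpha -> alpha).
Hypothesis tau_invol : involutive tau.
Variables (f : alpha -> alpha) (a b : alpha).
Hypothesis f_hom : nw_homotopic tau (nw_push f (w_ab a b)) (w_ab a b).
Hypothesis ab : a <> tau b.

Lemma lk_invariant_push (chi rho : alpha -> int) (P : int -> int) :
  (forall x, chi (tau x) = - chi x) -> P 0 = 0 ->
  (forall v x, P (v + (rho x + rho (tau x))) = P v) ->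
  chi (f a) * P (rho (f b)) + chi (f b) * P (- rho (f a)) =
  chi a * P (rho b) + chi b * P (- rho a).
Proof.
move=> chiN P0 P_per.
have := nw_homotopic_invariant (I := fun w => lk_invariant chi rho P (nw_lab w) (nw_word w))
  (lk_invariant_step chiN P0 P_per) f_hom.
by rewrite /= !lk_invariant_ABAB.
Qed.

Lemma linked_pairs_push (W : alpha -> alpha -> bool) :
  (forall x y, W (tau x) y = W x y) -> (forall x y, W x (tau y) = W x y) ->
  (forall x, W x x = false) -> W (f a) (f b) = W a b.
Proof.
move=> W_l W_r W_irr.
have := nw_homotopic_invariant (I := fun w => odd (linked_pairs W (nw_lab w) (nw_word w)))
  (linked_pairs_step W_l W_r W_irr) f_hom.
by rewrite /= !linked_pairs_ABAB !oddb.
Qed.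

Lemma orbit_sign_push z c : z <> tau z ->
  orbit_sign tau z (f a) * (in_orbit tau c (f b))%:R +
  orbit_sign tau z (f b) * (in_orbit tau c (f a))%:R =
  orbit_sign tau z a * (in_orbit tau c b)%:R + orbit_sign tau z b * (in_orbit tau c a)%:R.
Proof.
move=> zz; pose mod2 (v : int) := (v %% 2)%Z.
have mod2E (beta : bool) : mod2 beta%:R = beta%:R by case: beta.
have mod2NE (beta : bool) : mod2 (- beta%:R) = beta%:R by case: beta.
have := @lk_invariant_push (orbit_sign tau z) (fun x => (in_orbit tau c x)%:R) mod2.
rewrite !mod2E !mod2NE; apply=> // [|v x]; first exact: orbit_signN.
by rewrite /mod2 in_orbit_tau //; case: (in_orbit tau c x); rewrite ?addr0 ?modzDr.
Qed.

Lemma push_fixed_diag : b = a -> f a = a.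
Proof.
move=> ba; have aa : a <> tau a by rewrite -{2}ba.
have := orbit_sign_push a aa; rewrite ba orbit_sign_refl in_orbit_refl.
case: in_orbit => /=; rewrite ?mulr1n ?mulr0n ?mulr1 ?mulr0 => e.
  by apply: (@orbit_sign_eq1 _ tau); lia.
by move: e; lia.
Qed.

Lemma push_orbits : b <> a ->
  [/\ in_orbit tau a (f a), in_orbit tau b (f b)
    & forall x, ~~ (in_orbit tau a x && in_orbit tau b x)].
Proof.
move=> nab; have disj x : ~~ (in_orbit tau a x && in_orbit tau b x).
  apply/negP => /andP[/in_orbitP[]-> /in_orbitP[] e].
  - exact: nab.
  - exact: ab.
  - by apply: ab; rewrite -e tau_invol.
  - by apply: nab; rewrite -[b]tau_invol -e tau_invol.
suff /andP[] : in_orbit tau a (f a) && in_orbit tau b (f b) by [].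
rewrite (@linked_pairs_push (fun x y => in_orbit tau a x && in_orbit tau b y)) /=.
- by rewrite !in_orbit_refl.
- by move=> x y; rewrite in_orbit_tau.
- by move=> x y; rewrite in_orbit_tau.
- by move=> x; apply/negbTE.
Qed.

Lemma fixed_of_push_homotopic : f a = a /\ f b = b.
Proof.
have [ba|nab] := pselect (b = a); first by rewrite ba push_fixed_diag.
have [fa_a fb_b disj] := push_orbits nab.
have [afb bfa] : ~~ in_orbit tau a (f b) /\ ~~ in_orbit tau b (f a).
  by split; [apply: contraNN (disj (f b)) => -> | apply: contraNN (disj (f a)) => ->];
    rewrite ?fa_a ?fb_b.
have [ab' ba'] : ~~ in_orbit tau a b /\ ~~ in_orbit tau b a.
  by split; [apply: contraNN (disj b) => -> | apply: contraNN (disj a) => ->];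
    rewrite in_orbit_refl.
split; first exact: orbit_sign_fixed fa_a fb_b afb ab' (orbit_sign_push b).
apply: orbit_sign_fixed fb_b fa_a bfa ba' _ => bb.
by rewrite addrC [RHS]addrC; apply: orbit_sign_push.
Qed.
End HomotopyAutomorphism.

Lemma wf_nanoword_all (alpha : Type) (w : seq nat) (L : nat -> alpha) :
  all (fun D => count_mem D w == 2%N) w -> wf_nanoword (Nanoword w L).
Proof. by move/allP=> w2 D /w2/eqP. Qed.

Lemma relabel_homotopic (alpha : Type) (tau : alpha -> alpha) w (L L' : nat -> alpha) :
  wf_nanoword (Nanoword w L) -> {in w, L' =1 L} ->
  nw_homotopic tau (Nanoword w L) (Nanoword w L').
Proof. by move=> wf_w eqL; apply/rst_step/(@step_iso _ _ _ _ id); rewrite ?map_id. Qed.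

Lemma w_ab_tau_trivial (alpha : Type) (tau : alpha -> alpha) (u : alpha) (L : nat -> alpha) :
  involutive tau -> nw_homotopic tau (w_ab u (tau u)) (Nanoword [::] L).
Proof.
(* Insert two cancelling pairs, rearrange them by move 3, and cancel again. *)
move=> tau_invol; pose M n := if odd n then tau u else u.
apply: (rst_trans _ _ _ (Nanoword [:: 0; 1; 0; 1]%N M)).
  by apply: relabel_homotopic; [exact: wf_nanoword_all | move=> n; rewrite !inE => /or4P[]/eqP->].
apply: (rst_trans _ _ _ (Nanoword [:: 2; 3; 0; 1; 3; 2; 0; 1]%N M)).
  apply/rst_sym/rst_step.
  by apply: (@step_move2 _ _ M 2 3 [::] [:: 0; 1]%N [:: 0; 1]%N); first exact: wf_nanoword_all.
apply: (rst_trans _ _ _ (Nanoword [:: 2; 4; 5; 3; 0; 1; 3; 2; 0; 1; 5; 4]%N M)).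
  apply/rst_sym/rst_step.
  apply: (@step_move2 _ _ M 4 5 [:: 2]%N [:: 3; 0; 1; 3; 2; 0; 1]%N [::]) => //.
  exact: wf_nanoword_all.
apply: (rst_trans _ _ _ (Nanoword [:: 2; 4; 3; 5; 0; 3; 1; 2; 0; 5; 1; 4]%N M)).
  apply/rst_sym/rst_step.
  apply: (@step_move3 _ _ M 3 5 1 [:: 2; 4]%N [:: 0]%N [:: 2; 0]%N [:: 4]%N) => //.
  exact: wf_nanoword_all.
apply: (rst_trans _ _ _ (Nanoword [:: 2; 4; 3; 3; 1; 2; 1; 4]%N M)).
  apply: rst_step; apply: (@step_move2 _ _ M 5 0 [:: 2; 4; 3]%N [:: 3; 1; 2]%N [:: 1; 4]%N).
    exact: wf_nanoword_all.
  by rewrite /M /= tau_invol.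
apply: (rst_trans _ _ _ (Nanoword [:: 2; 4; 1; 2; 1; 4]%N M)).
  by apply/rst_step/(@step_move1 _ _ M 3 [:: 2; 4]%N [:: 1; 2; 1; 4]%N); exact: wf_nanoword_all.
apply: (rst_trans _ _ _ (Nanoword [:: 2; 2]%N M)).
  apply/rst_step/(@step_move2 _ _ M 4 1 [:: 2]%N [:: 2]%N [::]) => //.
  exact: wf_nanoword_all.
apply: (rst_trans _ _ _ (Nanoword [::] M)).
  by apply/rst_step/(@step_move1 _ _ M 2 [::] [::]); exact: wf_nanoword_all.
exact: relabel_homotopic.
Qed.

Theorem corollary8p5 (alpha : Type) (tau : alpha -> alpha)
    (tau_invol : forall x, tau (tau x) = x) (a b : alpha) :
  (a = tau b ->
     forall f, homotopy_automorphism tau (w_ab a b) f <-> tau_equivariant_bij tau f) /\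
  (a <> tau b ->
     forall f, homotopy_automorphism tau (w_ab a b) f <->
               (tau_equivariant_bij tau f /\ f a = a /\ f b = b)).
Proof.
split=> ab f.
  split=> [[] // | [f_bij f_tau]]; split=> //.
  have -> : b = tau a by rewrite ab tau_invol.
  apply: (rst_trans _ _ _ (w_ab (f a) (tau (f a)))).
    apply: relabel_homotopic => [|n]; first exact: wf_nanoword_all.
    by rewrite /= !inE => /or4P[]/eqP->; rewrite /= ?f_tau.
  apply: (rst_trans _ _ _ (Nanoword [::] (fun _ => a))); first exact: w_ab_tau_trivial.
  exact/rst_sym/w_ab_tau_trivial.
split=> [[[f_bij f_tau] f_hom] | [f_fix [fa fb]]].
  by split=> //; exact: fixed_of_push_homotopic f_hom ab.
split=> //; apply: relabel_homotopic => [|n]; first exact: wf_nanoword_all.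
by rewrite /= !inE => /or4P[]/eqP->; rewrite /= ?fa ?fb.
Qed.
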